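(* Let $S$ be a semigroup with finite $\mathcal{R}$-height, and let $A$ be a left ideal of $S$. Then $\mathrm{H}_{\mathcal{R}}(A)\leq 2\,\mathrm{H}_{\mathcal{R}}(S)$.
   Context: For a semigroup $S$, $S^1$ denotes $S$ with an identity adjoined if necessary. Green's preorder: $a\leq_{\mathcal{R}} b$ iff $aS^1\subseteq bS^1$; $\mathcal{R}$ is the associated equivalence; the $\mathcal{R}$-height $\mathrm{H}_{\mathcal{R}}$ of a semigroup is the supremum of the cardinalities of chains in its poset of $\mathcal{R}$-classes. A left ideal is a non-empty subset $A$ with $SA\subseteq A$; $\mathrm{H}_{\mathcal{R}}(A)$ is computed in $A$ itself. *)

From Stdlib Require Import List Arith.
Import ListNotations.

Section Green.
Variable T : Type.
Variable mul : T -> T -> T.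

(* A subset of T is a predicate; the carrier P is the semigroup in which
   Green's relation is computed (P = everything for S itself, P = A for a
   left ideal A, which is a subsemigroup). *)

Definition in_prin_right (P : T -> Prop) (b x : T) : Prop :=
  x = b \/ exists c, P c /\ x = mul b c.

Definition Rle (P : T -> Prop) (a b : T) : Prop :=
  forall x, in_prin_right P a x -> in_prin_right P b x.

Definition Rlt (P : T -> Prop) (a b : T) : Prop :=
  Rle P a b /\ ~ Rle P b a.

(* A finite chain of R-classes of P, listed by representatives in strictly
   decreasing order (every later class strictly below every earlier one). *)
Definition Rchain (P : T -> Prop) (l : list T) : Prop :=
  Forall P l /\ ForallOrdPairs (fun a b => Rlt P b a) l.

Definition RHeight (P : T -> Prop) (h : nat) : Prop :=
  (exists l, Rchain P l /\ length l = h) /\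
  (forall l, Rchain P l -> length l <= h).

Definition left_ideal (A : T -> Prop) : Prop :=
  (exists a, A a) /\ forall s a, A a -> A (mul s a).

End Green.

Definition associative_op {T : Type} (mul : T -> T -> T) : Prop :=
  forall x y z, mul x (mul y z) = mul (mul x y) z.

(* A strict step y <_R x in the left ideal A forces y = x u with u in A. If
   moreover x <=_R z in S, then x lies in z S^1, so y lies in z S^1 A, which is
   contained in z A^1 because A is a left ideal; that is, y <=_R z in A. Hence
   two consecutive strict steps of an R-chain of A compose to a strict step in
   S, so every other element of an R-chain of A forms an R-chain of S, and
   chains of A have at most twice as many elements as chains of S. *)

From Stdlib Require Import List Arith Lia Classical.
Import ListNotations.

Fixpoint alternate {X : Type} (l : list X) : list X :=
  match l with
  | a :: _ :: r => a :: alternate r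
  | _ => l
  end.

Lemma list_pair_ind {X : Type} (P : list X -> Prop) :
  P [] -> (forall a, P [a]) -> (forall a b r, P r -> P (a :: b :: r)) ->
  forall l, P l.
Proof.
  intros H0 H1 H2. fix IH 1. intros [|a [|b r]].
  - exact H0.
  - exact (H1 a).
  - exact (H2 a b r (IH r)).
Qed.

Lemma in_alternate {X : Type} (l : list X) z : In z (alternate l) -> In z l.
Proof.
  induction l as [| |a b r IH] using list_pair_ind; simpl; auto.
  intros [Hz | Hz]; auto.
Qed.

Lemma length_le_double_alternate {X : Type} (l : list X) :
  length l <= 2 * length (alternate l).
Proof. induction l using list_pair_ind; simpl; lia. Qed.

Lemma ForallOrdPairs_alternate {X : Type} (R R' : X -> X -> Prop) :
  (forall x y z, R x y -> R y z -> R' x z) ->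
  forall l, ForallOrdPairs R l -> ForallOrdPairs R' (alternate l).
Proof.
  intros Hcomp l. induction l as [| |a b r IH] using list_pair_ind;
    intros Hl; simpl.
  - constructor.
  - repeat constructor.
  - inversion Hl as [|? ? Ha Hbr]; subst.
    inversion Hbr as [|? ? Hb Hr]; subst.
    inversion Ha as [|? ? Hab _]; subst.
    rewrite Forall_forall in Hb.
    constructor; auto.
    apply Forall_forall. intros z Hz. apply in_alternate in Hz. eauto.
Qed.

Lemma bounded_nat_pred_has_max (Q : nat -> Prop) (B : nat) :
  Q 0 -> (forall n, Q n -> n <= B) -> exists m, Q m /\ forall n, Q n -> n <= m.
Proof.
  intros Q0. induction B as [|B IH]; intros HB.
  - exists 0. auto.
  - destruct (classic (Q (S B))) as [HQ | HnQ].
    + exists (S B). auto.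
    + apply IH. intros n Hn. specialize (HB n Hn).
      assert (n <> S B) by (intros ->; contradiction). lia.
Qed.

Section Green.
Variable T : Type.
Variable mul : T -> T -> T.
Hypothesis mulA : associative_op mul.

Local Notation full := (fun _ : T => True).

Definition mul_closed (P : T -> Prop) : Prop :=
  forall a b, P a -> P b -> P (mul a b).

Lemma left_ideal_mul_closed A : left_ideal T mul A -> mul_closed A.
Proof. intros [_ HA] a b _ Hb. exact (HA a b Hb). Qed.

Lemma in_prin_right_trans P a b c : mul_closed P ->
  in_prin_right T mul P c b -> in_prin_right T mul P b a ->
  in_prin_right T mul P c a.
Proof.
  intros HP [-> | [u [Hu ->]]] Hba; auto.
  destruct Hba as [-> | [v [Hv ->]]].
  - right. exists u. auto.
  - right. exists (mul u v). split; auto.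
Qed.

Lemma Rle_in_prin_right P a b : mul_closed P ->
  Rle T mul P a b <-> in_prin_right T mul P b a.
Proof.
  intros HP. split.
  - intros Hab. apply Hab. left. reflexivity.
  - intros Hba x Hx. eapply in_prin_right_trans; eauto.
Qed.

Lemma Rle_subset P Q a b : (forall x, P x -> Q x) -> mul_closed Q ->
  Rle T mul P a b -> Rle T mul Q a b.
Proof.
  intros HPQ HQ Hab. apply Rle_in_prin_right; auto.
  destruct (Hab a (or_introl eq_refl)) as [-> | [u [Hu ->]]].
  - left. reflexivity.
  - right. eauto.
Qed.

Lemma Rlt_proper_factor P x y :
  Rlt T mul P y x -> exists u, P u /\ y = mul x u.
Proof.
  intros [Hyx Hxy].
  destruct (Hyx y (or_introl eq_refl)) as [-> | Hu]; auto.
  exfalso. apply Hxy. intros w Hw. exact Hw.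
Qed.

Lemma Rlt_left_ideal_Rle A x y z : left_ideal T mul A ->
  Rlt T mul A y x -> Rle T mul full x z -> Rle T mul A y z.
Proof.
  intros HA Hyx Hxz.
  apply Rle_in_prin_right; [exact (left_ideal_mul_closed A HA) |].
  destruct (Rlt_proper_factor A x y Hyx) as [u [Hu ->]].
  destruct (Hxz x (or_introl eq_refl)) as [-> | [s [_ ->]]].
  - right. eauto.
  - right. exists (mul s u). split.
    + exact (proj2 HA s u Hu).
    + symmetry. apply mulA.
Qed.

Lemma Rlt_left_ideal_two_steps A x y z : left_ideal T mul A ->
  Rlt T mul A y x -> Rlt T mul A z y -> Rlt T mul full z x.
Proof.
  intros HA Hyx [Hzy Hyz]. split.
  - apply (Rle_subset A); [auto | intros a b _ _; exact I |].
    intros w Hw. exact (proj1 Hyx w (Hzy w Hw)).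
  - intros Hxz. exact (Hyz (Rlt_left_ideal_Rle A x y z HA Hyx Hxz)).
Qed.

Lemma Rchain_left_ideal_alternate A l : left_ideal T mul A ->
  Rchain T mul A l -> Rchain T mul full (alternate l).
Proof.
  intros HA [_ Hl]. split.
  - apply Forall_forall. auto.
  - apply (ForallOrdPairs_alternate (fun a b => Rlt T mul A b a)); auto.
    intros x y z Hxy Hyz. exact (Rlt_left_ideal_two_steps A x y z HA Hxy Hyz).
Qed.

Lemma Rchain_left_ideal_length A h l : left_ideal T mul A ->
  RHeight T mul full h -> Rchain T mul A l -> length l <= 2 * h.
Proof.
  intros HA [_ Hh] Hl.
  pose proof (Hh _ (Rchain_left_ideal_alternate A l HA Hl)).
  pose proof (length_le_double_alternate l). lia.
Qed.

Lemma RHeight_of_bounded P B :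
  (forall l, Rchain T mul P l -> length l <= B) ->
  exists h, RHeight T mul P h /\ h <= B.
Proof.
  intros HB.
  destruct (bounded_nat_pred_has_max
              (fun n => exists l, Rchain T mul P l /\ length l = n) B)
    as [h [[l [Hl Hlen]] Hmax]].
  - exists []. repeat split; constructor.
  - intros n [l [Hl <-]]. auto.
  - exists h. subst h. repeat split; eauto.
Qed.

End Green.

Theorem corollary3p9 (T : Type) (mul : T -> T -> T)
  (Hassoc : associative_op mul) (h : nat)
  (HS : RHeight T mul (fun _ => True) h)
  (A : T -> Prop) (HA : left_ideal T mul A) :
  exists hA, RHeight T mul A hA /\ hA <= 2 * h.
Proof.
  apply RHeight_of_bounded.
  intros l Hl. exact (Rchain_left_ideal_length T mul Hassoc A h l HA HS Hl).
Qed.
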